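(* Let $\mathcal{X},\mathcal{Y}$ be finite sets and $p(X,Y)$ a distribution on $\mathcal{X}\times\mathcal{Y}$ with fully supported marginals. Let $q\in C(\mathcal{X}\times\mathcal{Y},\mathcal{T})$ satisfy $D(q(T)\|\tilde q(T))=D(p(X,Y)\|p(X)p(Y))$, and define $q'\in C(\mathcal{X}\times\mathcal{Y},\mathcal{T})$ by $q'(t|x,y)=\sum_{j=1}^n q(t|\mathcal{T}^q_j)\,q(\mathcal{T}^q_j|x,y)$ for $(x,y)\in\mathcal{S}$ and $q'(t|x,y)=q(t|x,y)$ for $(x,y)\notin\mathcal{S}$. Then: (i) for $(x,y)\in\mathcal{S}$ and every $j$, $q(\mathcal{T}^q_j|x,y)=\delta_{(x,y)\in\mathcal{S}_j}$; (ii) $q'(T)=q(T)$; (iii) $\mathcal{T}^q_j=\mathcal{T}^{q'}_j$ for all $j$; (iv) $I_q(X,Y;T)\ge I_{q'}(X,Y;T)$, with equality if and only if $q=q'$.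
   Context: $\mathcal{T}:=\mathbb{N}$; $C(\mathcal{A},\mathcal{B})$ is the set of channels from $\mathcal{A}$ to $\mathcal{B}$. For a channel $r\in C(\mathcal{X}\times\mathcal{Y},\mathcal{T})$, $r(T)$ and $\tilde r(T)$ are the marginals on $\mathcal{T}$ of $p(x,y)r(t|x,y)$ and $p(x)p(y)r(t|x,y)$, and $I_r(X,Y;T)$ is the mutual information under $p(x,y)r(t|x,y)$; $D$ is KL divergence. For $A\subseteq\mathcal{T}$: $q(A)=\sum_{t\in A}q(t)$, $q(A|x,y)=\sum_{t\in A}q(t|x,y)$, $q(t|A)=\frac{q(t)}{q(A)}\delta_{t\in A}$. $\mathcal{S}=\operatorname{supp}p(X,Y)$; $(x,y)\sim(x',y')$ iff $\frac{p(x,y)}{p(x)p(y)}=\frac{p(x',y')}{p(x')p(y')}$, whose classes contained in $\mathcal{S}$ are $\mathcal{S}_1,\dots,\mathcal{S}_n$. For a channel $r$, $\mathcal{T}^r_j:=\{t\in\mathcal{T}:\exists(x,y)\in\mathcal{S}_j,\ r(t|x,y)>0\}$. *)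

From HB Require Import structures.
From mathcomp Require Import all_boot all_order all_algebra.
From mathcomp Require Import all_classical all_reals.
From mathcomp Require Import ereal topology normedtype sequences esum exp.
Set Implicit Arguments. Unset Strict Implicit. Unset Printing Implicit Defensive.
Import Order.TTheory GRing.Theory Num.Theory.
Local Open Scope ring_scope.
Local Open Scope classical_set_scope.

Section Defs.
Variable R : realType.

Definition xsum (I : choiceType) (f : I -> \bar R) : \bar R :=
  (\esum_(i in [set: I]) maxe (f i) 0%E - \esum_(i in [set: I]) maxe (- f i) 0%E)%E.

Definition kl_term (I : choiceType) (P Q : I -> R) (i : I) : \bar R :=
  if P i == 0 then 0%E
  else if Q i == 0 then +oo%E
  else (P i * ln (P i / Q i))%:E.

Definition KL (I : choiceType) (P Q : I -> R) : \bar R := xsum (kl_term P Q).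

Variables X Y : finType.

Definition is_dist (p : X * Y -> R) : Prop :=
  (forall z, 0 <= p z) /\ \sum_(z : X * Y) p z = 1.

Definition pX (p : X * Y -> R) (x : X) : R := \sum_(y : Y) p (x, y).
Definition pY (p : X * Y -> R) (y : Y) : R := \sum_(x : X) p (x, y).

Definition pXpY (p : X * Y -> R) (z : X * Y) : R := pX p z.1 * pY p z.2.

(* channels in C(X x Y, T) with T = nat: q z t = q(t|z) *)
Definition channel (q : X * Y -> nat -> R) : Prop :=
  (forall z t, 0 <= q z t) /\
  (forall z, (\sum_(0 <= t <oo) (q z t)%:E)%E = 1%E).

Definition outT (p : X * Y -> R) (r : X * Y -> nat -> R) (t : nat) : R :=
  \sum_(z : X * Y) p z * r z t.
Definition outTt (p : X * Y -> R) (r : X * Y -> nat -> R) (t : nat) : R :=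
  \sum_(z : X * Y) pXpY p z * r z t.

Definition MI (p : X * Y -> R) (r : X * Y -> nat -> R) : \bar R :=
  KL (fun w : X * Y * nat => p w.1 * r w.1 w.2)
     (fun w : X * Y * nat => p w.1 * outT p r w.2).

Definition setsum (f : nat -> R) (A : set nat) : R :=
  fine (\esum_(t in A) (f t)%:E)%E.

Definition condA (f : nat -> R) (A : set nat) (t : nat) : R :=
  if `[< A t >] then f t / setsum f A else 0.

Definition supp (p : X * Y -> R) : {set X * Y} := [set z | p z != 0].

Definition ratio (p : X * Y -> R) (z : X * Y) : R := p z / pXpY p z.

Definition classes (p : X * Y -> R) : {set {set X * Y}} :=
  [set [set z in supp p | ratio p z == ratio p z0] | z0 in supp p].

Definition Tset (r : X * Y -> nat -> R) (C : {set X * Y}) : set nat :=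
  [set t | exists2 z, z \in C & 0 < r z t].

Definition qprime (p : X * Y -> R) (q : X * Y -> nat -> R)
    (z : X * Y) (t : nat) : R :=
  if z \in supp p then
    \sum_(C in classes p) condA (outT p q) (Tset q C) t * setsum (q z) (Tset q C)
  else q z t.

End Defs.

From Pilot Require Import Defs.
From HB Require Import structures.
From mathcomp Require Import all_boot all_order all_algebra.
From mathcomp Require Import all_classical all_reals.
From mathcomp Require Import ereal topology normedtype sequences esum exp.
From mathcomp Require Import ring lra.
Import Order.TTheory GRing.Theory Num.Theory.
Local Open Scope ring_scope.
Local Open Scope classical_set_scope.

(* If KL(q(T) || ~q(T)) = KL(p || p(X)p(Y)), the log-sum inequality behind the data
   processing inequality is tight at every output t, which forces the density ratio
   p(x,y)/(p(x)p(y)) to be constant on the inputs of positive mass reaching t.  So every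
   output is reached from a single class S_j, which gives (i), and replacing q(.|x,y) on
   S_j by the output law q(t|T_j) of its class preserves q(T) and the sets T_j.  Finally
   q'(t|x,y)/q(t) = 1/p(S_j) is constant on the support of each row, whence
   I_q = I_q' + sum_(x,y) p(x,y) D(q(.|x,y) || q'(.|x,y)). *)

Section GeneralFacts.
Context {R : realType}.

Lemma ln_le_sub1 (y : R) : 0 < y -> ln y <= y - 1.
Proof.
move=> y0; have /le_ln1Dx : -1 < y - 1 by lra.
by rewrite addrC subrK.
Qed.

Lemma ln_eq_sub1 (y : R) : 0 < y -> ln y = y - 1 -> y = 1.
Proof.
move=> y0 lny; apply/eqP; rewrite -(ln_eq0 y0); apply/negPn/negP => /expR_gt1Dx.
by rewrite lnK ?posrE//; lra.
Qed.

(* Summand of the generalised KL divergence; its nonnegativity is the pointwise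
   form of the log-sum inequality. *)
Definition gkl (u v : R) := u * ln (u / v) - u + v.

Lemma gkl_ge0 (u v : R) : 0 <= u -> 0 <= v -> (0 < u -> 0 < v) ->
  0 <= gkl u v /\ (gkl u v = 0 -> u = v).
Proof.
rewrite /gkl le_eqVlt => + v0 uv; case/orP => [/eqP<-|u0].
  by rewrite !mul0r sub0r oppr0 add0r; split.
have v0' := uv u0.
have e : u * ln (u / v) - u + v = u * (v / u - 1 - ln (v / u)).
  by rewrite -lnV ?posrE ?divr_gt0// invf_div; field; rewrite gt_eqF.
have := ln_le_sub1 _ (divr_gt0 v0' u0); rewrite e => lnvu.
split; first by rewrite mulr_ge0//; lra.
move=> /eqP; rewrite mulf_eq0 gt_eqF//= subr_eq0 => /eqP/esym.
by move=> /(ln_eq_sub1 _ (divr_gt0 v0' u0)) /divr1_eq ->.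
Qed.

Lemma maxr0_subN (x : R) : Num.max x 0 - Num.max (- x) 0 = x.
Proof. by rewrite !maxEle; case: (lerP x 0) => ?; case: (lerP (- x) 0) => ?; lra. Qed.

Lemma esumT_fin (T : finType) (g : T -> \bar R) : (forall z, 0 <= g z)%E ->
  (\esum_(z in [set: T]) g z = \sum_(z : T) g z)%E.
Proof.
move=> g0; rewrite esum_fset//; last exact: finite_finset.
rewrite (fsbigE (enum T)) ?enum_uniq//; last by move=> i _; rewrite mem_enum.
by under eq_bigl do rewrite in_setT; rewrite big_enum.
Qed.

Lemma esumZ_nat (A : set nat) (c : R) (f : nat -> R) : 0 <= c ->
  (forall t, 0 <= f t) ->
  (\esum_(t in A) (c * f t)%:E = c%:E * \esum_(t in A) (f t)%:E)%E.
Proof.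
move=> c0 f0; rewrite esum_mkcond [X in (_ * X)%E]esum_mkcond.
rewrite -!nneseries_esumT; last 2 first.
- by move=> n; case: ifP => // _; rewrite lee_fin.
- by move=> n; case: ifP => // _; rewrite lee_fin mulr_ge0.
rewrite -nneseriesZl; last by move=> n _; case: ifP => // _; rewrite lee_fin.
by apply: eq_eseriesr => t _; case: ifP => _; rewrite ?EFinM ?mule0.
Qed.

Lemma esum_ge_at (I : choiceType) (f : I -> \bar R) i :
  (forall j, 0 <= f j)%E -> (f i <= \esum_(j in [set: I]) f j)%E.
Proof. by move=> f0; apply: esum_ge; exists [set i]; rewrite ?fsbig_set1. Qed.

Lemma esum_eq0P (I : choiceType) (f : I -> R) : (forall i, 0 <= f i) ->
  (\esum_(i in [set: I]) (f i)%:E)%E = 0%E -> forall i, f i = 0.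
Proof.
move=> f0 f00 i; apply/eqP; rewrite eq_le f0 andbT.
have := esum_ge_at _ (fun j => (f j)%:E) i.
by rewrite f00 lee_fin; apply=> j; rewrite lee_fin.
Qed.

Lemma xsum_ge0 (I : choiceType) (f : I -> R) : (forall i, 0 <= f i) ->
  xsum (fun i => (f i)%:E) = (\esum_(i in [set: I]) (f i)%:E)%E.
Proof.
move=> f0; rewrite /xsum [X in (_ - X)%E]esum1 ?sube0 => [|i _].
  by apply: eq_esum => i _; rewrite -EFin_max max_l.
by rewrite -EFinN -EFin_max max_r // oppr_le0.
Qed.

Lemma xsum_fin (T : finType) (k : T -> R) :
  xsum (fun z => (k z)%:E) = (\sum_z k z)%:E.
Proof.
rewrite /xsum; under eq_esum do rewrite -EFin_max.
under [X in (_ - X)%E]eq_esum do rewrite -EFinN -EFin_max.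
rewrite !esumT_fin => [|z|z]; rewrite ?lee_fin ?le_max ?lexx ?orbT//.
by rewrite !sumEFin -EFinB -sumrB; under eq_bigr do rewrite maxr0_subN.
Qed.

Lemma sube_of_adde_eq (x y u v : \bar R) : (0 <= x)%E -> (0 <= y)%E ->
  (x <= u)%E -> (y <= v)%E -> u \is a fin_num \/ v \is a fin_num ->
  (x + v = y + u -> x - y = u - v)%E.
Proof.
case: x y u v => [x||] [y||] [u||] [v||] //=; rewrite ?lee_fin => x0 y0 xu yv.
all: try by case.
all: try by move=> _ [] ->.
by move=> _ /eqP; rewrite -!EFinD eqe => /eqP e; congr EFin; lra.
Qed.

Lemma xsumB (I : choiceType) (g h : I -> R) :
  (forall i, 0 <= g i) -> (forall i, 0 <= h i) ->
  (\esum_(i in [set: I]) (g i)%:E)%E \is a fin_num \/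
  (\esum_(i in [set: I]) (h i)%:E)%E \is a fin_num ->
  xsum (fun i => (g i - h i)%:E) =
  (\esum_(i in [set: I]) (g i)%:E - \esum_(i in [set: I]) (h i)%:E)%E.
Proof.
move=> g0 h0 fin_gh; rewrite /xsum.
under eq_esum do rewrite -EFin_max.
under [X in (_ - X)%E]eq_esum do rewrite -EFinN -EFin_max.
have max0 (x : R) : (0 <= (Num.max x 0)%:E)%E by rewrite lee_fin le_max lexx orbT.
apply: sube_of_adde_eq fin_gh _; rewrite ?esum_ge0//.
- by apply: le_esum => i _; rewrite lee_fin ge_max g0 gerBl h0.
- by apply: le_esum => i _; rewrite lee_fin ge_max h0 opprB gerBl g0.
rewrite -!esumD => [|i _|i _|i _|i _]; rewrite ?max0 ?lee_fin//.
by apply: eq_esum => i _; rewrite -!EFinD; congr EFin; have := maxr0_subN (g i - h i); lra.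
Qed.
End GeneralFacts.

Section Channels.
Context {R : realType} {X Y : finType} (p : X * Y -> R).
Hypothesis p_ge0 : forall z, 0 <= p z.

Lemma channel_esum (s : X * Y -> nat -> R) z : channel s ->
  (\esum_(t in [set: nat]) (s z t)%:E)%E = 1%E.
Proof. by case=> s0 s1; rewrite -nneseries_esumT// => t; rewrite lee_fin. Qed.

Lemma esum_channel_mix {s : X * Y -> nat -> R} {d : X * Y -> R} :
  channel s -> (forall z, 0 <= d z) ->
  (\esum_(t in [set: nat]) (\sum_z d z * s z t)%:E)%E = (\sum_z d z)%:E.
Proof.
move=> s_ch d0; have [s0 _] := s_ch; under eq_esum do rewrite -sumEFin.
rewrite esum_sum => [|t z _ _]; last by rewrite lee_fin mulr_ge0.
by under eq_bigr do rewrite esumZ_nat// channel_esum// mule1; rewrite sumEFin.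
Qed.

Lemma esum_channel_pair {s : X * Y -> nat -> R} {d : X * Y -> R} :
  channel s -> (forall z, 0 <= d z) ->
  (\esum_(v in [set: (X * Y) * nat]) (d v.1 * s v.1 v.2)%:E)%E =
  (\sum_z d z)%:E.
Proof.
move=> s_ch d0; have [s0 _] := s_ch.
have -> : [set: (X * Y) * nat] = [set: X * Y] `*`` (fun=> [set: nat]).
  by apply/seteqP; split.
rewrite -(esum_esum (a := fun z t => (d z * s z t)%:E)) => [|z t _ _];
  last by rewrite lee_fin mulr_ge0.
rewrite esumT_fin => [|z]; last by apply: esum_ge0 => t _; rewrite lee_fin mulr_ge0.
by under eq_bigr do rewrite esumZ_nat// channel_esum// mule1; rewrite sumEFin.
Qed.

Lemma outT_ge (s : X * Y -> nat -> R) z t : (forall z t, 0 <= s z t) ->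
  p z * s z t <= outT p s t.
Proof.
move=> s0; rewrite /outT (bigD1 z)//= lerDl.
by apply: sumr_ge0 => i _; exact: mulr_ge0.
Qed.

Lemma MI_xsum (s : X * Y -> nat -> R) : (forall z t, 0 <= s z t) ->
  MI p s = xsum (fun v => (p v.1 * s v.1 v.2 * ln (s v.1 v.2 / outT p s v.2))%:E).
Proof.
move=> s0; congr xsum; apply: funext => -[z t]; rewrite /kl_term /=.
have [->|pzs0] := eqVneq (p z * s z t) 0; first by rewrite mul0r.
have pzs_gt0 : 0 < p z * s z t by rewrite lt_def pzs0 mulr_ge0.
have out_gt0 : 0 < outT p s t := lt_le_trans pzs_gt0 (outT_ge s z t s0).
have pz0 : p z != 0 by apply: contraNneq pzs0 => ->; rewrite mul0r.
rewrite mulf_eq0 (negbTE pz0) gt_eqF//=.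
by congr ((_ * ln _)%:E); field; rewrite pz0 gt_eqF.
Qed.

End Channels.

Section Coarsening.
Context {R : realType} {X Y : finType} (p : X * Y -> R) (q : X * Y -> nat -> R).
Hypothesis p_ge0 : forall z, 0 <= p z.
Hypothesis p_sum1 : \sum_z p z = 1.
Hypothesis pX_gt0 : forall x, 0 < pX p x.
Hypothesis pY_gt0 : forall y, 0 < pY p y.
Hypothesis q_channel : channel q.

Let q_ge0 : forall z t, 0 <= q z t := q_channel.1.

Local Notation a := (outT p q).
Local Notation b := (outTt p q).
Local Notation w := (pXpY p).
Local Notation r := (Defs.ratio p).
Local Notation qp := (qprime p q).

Lemma pXpY_gt0 z : 0 < w z.
Proof. by rewrite /pXpY mulr_gt0. Qed.

Lemma outT_ge0 t : 0 <= a t.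
Proof. by apply: sumr_ge0 => z _; rewrite mulr_ge0. Qed.

Lemma outT_gt0 {z t} : 0 < p z -> 0 < q z t -> 0 < a t.
Proof. by move=> pz qz; exact: lt_le_trans (mulr_gt0 pz qz) (outT_ge p p_ge0 q z t q_ge0). Qed.

Lemma outT_gt0P t : 0 < a t -> exists2 z, 0 < p z & 0 < q z t.
Proof.
rewrite lt_def outT_ge0 andbT /outT psumr_neq0; last by move=> z _; rewrite mulr_ge0.
case/hasP => z _ /=; rewrite lt_def mulf_eq0 negb_or => /andP[/andP[pz qz] _].
by exists z; rewrite lt_def ?pz ?qz ?p_ge0 ?q_ge0.
Qed.

Lemma outTt_gt0 t : 0 < a t -> 0 < b t.
Proof.
case/outT_gt0P => z _ qz_gt0.
have w_ge0 z' : 0 <= w z' by exact/ltW/pXpY_gt0.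
suff : 0 < outT w q t by [].
apply: lt_le_trans (outT_ge w w_ge0 q z t q_ge0).
exact: mulr_gt0 (pXpY_gt0 z) qz_gt0.
Qed.

Lemma KL_pXpY : KL p w = (\sum_z p z * ln (r z))%:E.
Proof.
rewrite /KL -xsum_fin; congr xsum; apply: funext => z; rewrite /kl_term.
by have [->|_] := eqVneq (p z) 0; rewrite ?mul0r// gt_eqF ?pXpY_gt0.
Qed.

Lemma KL_outT : KL a b = xsum (fun t => (a t * ln (a t / b t))%:E).
Proof.
congr xsum; apply: funext => t; rewrite /kl_term.
have [->|a_neq0] := eqVneq (a t) 0; first by rewrite mul0r.
by rewrite gt_eqF// outTt_gt0// lt_def a_neq0 outT_ge0.
Qed.

(* Gap of the log-sum inequality at output [t]. *)
Definition deficit t := \sum_z gkl (p z * q z t) (a t / b t * (w z * q z t)).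

Lemma gkl_deficit_ge0 z t :
  0 <= gkl (p z * q z t) (a t / b t * (w z * q z t)) /\
  (gkl (p z * q z t) (a t / b t * (w z * q z t)) = 0 ->
   p z * q z t = a t / b t * (w z * q z t)).
Proof.
have b_ge0 : 0 <= b t.
  by rewrite /outTt; apply: sumr_ge0 => z' _; rewrite mulr_ge0 ?q_ge0 ?ltW ?pXpY_gt0.
apply: gkl_ge0; first by rewrite mulr_ge0.
  exact: mulr_ge0 (divr_ge0 (outT_ge0 t) b_ge0) (mulr_ge0 (ltW (pXpY_gt0 z)) (q_ge0 z t)).
rewrite mulr_ge0_gt0// => /andP[pz qz].
have at_gt0 := outT_gt0 pz qz.
by rewrite !mulr_gt0 ?invr_gt0 ?outTt_gt0 ?pXpY_gt0.
Qed.

Lemma deficit_ge0 t : 0 <= deficit t.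
Proof. by apply: sumr_ge0 => z _; case: (gkl_deficit_ge0 z t). Qed.

Lemma ratio_of_deficit0 t z : deficit t = 0 -> 0 < p z -> 0 < q z t ->
  r z = a t / b t.
Proof.
move=> /psumr_eq0P /(_ z isT) gkl0 pz qz.
have {gkl0}/(gkl_deficit_ge0 z t).2 : gkl (p z * q z t) (a t / b t * (w z * q z t)) = 0.
  by apply: gkl0 => z' _; case: (gkl_deficit_ge0 z' t).
rewrite mulrA => /(mulIf (lt0r_neq0 qz)) pz_eq.
by rewrite /Defs.ratio pz_eq mulfK ?lt0r_neq0 ?pXpY_gt0.
Qed.

Lemma gkl_deficitE z t : gkl (p z * q z t) (a t / b t * (w z * q z t)) =
  p z * ln (r z) * q z t - p z * q z t * ln (a t / b t) - p z * q z t +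
  a t / b t * (w z * q z t).
Proof.
rewrite /gkl; congr (_ - _ + _).
have [pq0|pq_neq0] := eqVneq (p z * q z t) 0.
  by rewrite [p z * ln _ * _]mulrAC pq0 !mul0r subr0.
have /andP[pz qz] : (0 < p z) && (0 < q z t).
  by rewrite -mulr_ge0_gt0 // lt_def pq_neq0 mulr_ge0.
have at_gt0 := outT_gt0 pz qz.
have bt_gt0 := outTt_gt0 t at_gt0; have wz := pXpY_gt0 z.
have -> : p z * q z t / (a t / b t * (w z * q z t)) = r z / (a t / b t).
  by rewrite /Defs.ratio; field; rewrite !lt0r_neq0.
by rewrite ln_div ?posrE ?divr_gt0 //; ring.
Qed.

Lemma outT_ln_deficit t :
  a t * ln (a t / b t) = \sum_z p z * ln (r z) * q z t - deficit t.
Proof.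
have scale_b : \sum_z a t / b t * (w z * q z t) = a t.
  rewrite -mulr_sumr -/(outTt p q t).
  have [->|a_neq0] := eqVneq (a t) 0; first by rewrite !mul0r.
  by rewrite divfK // lt0r_neq0 // outTt_gt0 // lt_def a_neq0 outT_ge0.
rewrite /deficit (eq_bigr _ (fun z _ => gkl_deficitE z t)) big_split /= !sumrB.
rewrite scale_b -mulr_suml -/(outT p q t); lra.
Qed.

Hypothesis KL_eq : KL a b = KL p w.

(* Summed over [t], [outT_ln_deficit] reads KL(a||b) = KL(p||w) - sum_t deficit t
   with KL(p||w) finite. *)
Lemma deficit_eq0 t : deficit t = 0.
Proof.
pose c z := p z * ln (r z).
have max0 (x : R) : 0 <= Num.max x 0 by rewrite le_max lexx orbT.
have sum_c : \sum_z c z = \sum_z Num.max (c z) 0 - \sum_z Num.max (- c z) 0.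
  by rewrite -sumrB; apply: eq_bigr => z _; rewrite maxr0_subN.
move: KL_eq; rewrite KL_outT KL_pXpY -/(\sum_z c z) sum_c.
have -> : (fun t => (a t * ln (a t / b t))%:E) = fun t =>
    (\sum_z Num.max (c z) 0 * q z t -
     (\sum_z Num.max (- c z) 0 * q z t + deficit t))%:E.
  apply: funext => t'; rewrite outT_ln_deficit opprD addrA.
  by congr (EFin (_ - _)); rewrite -sumrB; apply: eq_bigr => z _; rewrite -mulrBl maxr0_subN.
have D_ge0 : (0 <= \esum_(t in [set: nat]) (deficit t)%:E)%E.
  by apply: esum_ge0 => t' _; rewrite lee_fin deficit_ge0.
rewrite xsumB; last 3 first.
- by move=> t'; apply: sumr_ge0 => z _; rewrite mulr_ge0 ?max0.
- move=> t'; rewrite addr_ge0 ?deficit_ge0 //.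
  by apply: sumr_ge0 => z _; rewrite mulr_ge0 ?max0.
- by left; rewrite esum_channel_mix.
under [X in (_ - X)%E]eq_esum do rewrite EFinD.
rewrite esumD => [|t' _|t' _]; rewrite ?lee_fin ?deficit_ge0 ?sumr_ge0 //; last first.
  by move=> z _; rewrite mulr_ge0 ?max0.
rewrite !esum_channel_mix // => KL_eq'; apply: esum_eq0P deficit_ge0 _ t.
move: KL_eq' D_ge0; case: (\esum_(t in _) _)%E => [e||] //=.
by rewrite -EFinD => -[e0] _; congr EFin; lra.
Qed.

Lemma ratio_eq_of_outputs t z z' : 0 < p z -> 0 < p z' ->
  0 < q z t -> 0 < q z' t -> r z = r z'.
Proof.
by move=> pz pz' qz qz'; rewrite !(ratio_of_deficit0 _ _ (deficit_eq0 t)).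
Qed.

Definition cl z := [set z' in supp p | r z' == r z].

Definition pmass (C : {set X * Y}) := \sum_(z in C) p z.

Local Notation pi z := (pmass (cl z)).

Lemma supp_gt0 {z} : z \in supp p -> 0 < p z.
Proof. by rewrite inE lt_def p_ge0 andbT. Qed.

Lemma notin_supp z : z \notin supp p -> p z = 0.
Proof. by rewrite inE negbK => /eqP. Qed.

Lemma cl_self {z} : z \in supp p -> z \in cl z.
Proof. by move=> zS; rewrite inE zS eqxx. Qed.

Lemma cl_classes {z} : z \in supp p -> cl z \in classes p.
Proof. by move=> zS; apply/imsetP; exists z. Qed.

Lemma classes_clE {C z} : C \in classes p -> z \in C -> C = cl z.
Proof.
case/imsetP => z0 _ -> /[!inE] /andP[_ /eqP rz].
by apply/setP => z'; rewrite !inE rz.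
Qed.

Lemma classes_supp {C z} : C \in classes p -> z \in C -> z \in supp p.
Proof. by case/imsetP => z0 _ -> /[!inE] /andP[]. Qed.

Lemma pmass_gt0 {C} : C \in classes p -> 0 < pmass C.
Proof.
case/imsetP => z zS ->; rewrite /pmass (bigD1 z) ?cl_self//=.
by rewrite ltr_wpDr ?supp_gt0 // sumr_ge0.
Qed.

Lemma pmass_le1 C : pmass C <= 1.
Proof.
rewrite -p_sum1 /pmass [X in _ <= X](bigID (mem C)) /= lerDl.
by rewrite sumr_ge0.
Qed.

Lemma Tset_clE {C z t} : C \in classes p -> z \in supp p -> 0 < q z t ->
  Tset q C t <-> C = cl z.
Proof.
move=> CP zS qz; split=> [[z' z'C qz'] | ->]; last by exists z; rewrite ?cl_self.
rewrite (classes_clE CP z'C); apply/setP => u; rewrite !inE.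
by rewrite (ratio_eq_of_outputs t _ _ (supp_gt0 (classes_supp CP z'C)) (supp_gt0 zS) qz' qz).
Qed.

Lemma q_Tset_iff {C z t} : C \in classes p -> z \in supp p -> 0 < q z t ->
  Tset q C t <-> z \in C.
Proof.
move=> CP zS qz; rewrite (Tset_clE CP zS qz).
by split=> [->|/(classes_clE CP)//]; exact: cl_self.
Qed.

Lemma esum_Tset_q C z : C \in classes p -> z \in supp p ->
  (\esum_(t in Tset q C) (q z t)%:E)%E = (if z \in C then 1 else 0)%:E.
Proof.
move=> CP zS; have q0 t : ~ 0 < q z t -> q z t = 0.
  by move/negP; rewrite lt_def q_ge0 andbT negbK => /eqP.
case: ifPn => zC; last first.
  apply: esum1 => t Tt; rewrite q0// => qz.
  by move/negP: zC; apply; exact/(q_Tset_iff CP zS qz).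
rewrite esum_mkcond -(channel_esum q z q_channel); apply: eq_esum => t _.
by case: ifPn => // /negP Tt; rewrite q0// => qz; apply/Tt/mem_set/(q_Tset_iff CP zS qz).
Qed.

Lemma setsum_Tset_q C z : C \in classes p -> z \in supp p ->
  setsum (q z) (Tset q C) = if z \in C then 1 else 0.
Proof. by move=> CP zS; rewrite /setsum esum_Tset_q //; case: ifP. Qed.

Lemma esum_Tset_outT C : C \in classes p ->
  (\esum_(t in Tset q C) (a t)%:E)%E = (pmass C)%:E.
Proof.
move=> CP; under eq_esum do rewrite -sumEFin.
rewrite esum_sum => [|t z _ _]; last by rewrite lee_fin mulr_ge0.
under eq_bigr do rewrite esumZ_nat//.
rewrite /pmass -sumEFin [RHS]big_mkcond /=; apply: eq_bigr => z _.
have [zS|zNS] := boolP (z \in supp p).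
  by rewrite esum_Tset_q//; case: ifP; rewrite ?mule1 ?mule0.
by rewrite notin_supp // mul0e; case: ifP.
Qed.

Lemma qprime_supp z t : z \in supp p ->
  qp z t = if `[< Tset q (cl z) t >] then a t / pi z else 0.
Proof.
move=> zS; rewrite /qprime zS (bigD1 (cl z)) ?cl_classes //=.
rewrite setsum_Tset_q ?cl_classes // cl_self // mulr1 big1 ?addr0.
  by rewrite /condA /setsum esum_Tset_outT ?cl_classes.
move=> C /andP[CP C_neq]; rewrite setsum_Tset_q //.
case: ifPn => [zC|]; last by rewrite mulr0.
by move: C_neq; rewrite (classes_clE CP zC) eqxx.
Qed.

Lemma qprime_out z t : z \notin supp p -> qp z t = q z t.
Proof. by move=> zNS; rewrite /qprime (negbTE zNS). Qed.

Lemma outT_qprime t : outT p (qp) t = a t.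
Proof.
have [at0|at_neq0] := eqVneq (a t) 0.
  rewrite at0 /outT big1 // => z _; have [zS|zNS] := boolP (z \in supp p).
    by rewrite qprime_supp // at0 mul0r; case: asboolP; rewrite mulr0.
  by rewrite notin_supp // mul0r.
have [z0 pz0 qz0] : exists2 z0, 0 < p z0 & 0 < q z0 t.
  by apply: outT_gt0P; rewrite lt_def at_neq0 outT_ge0.
have z0S : z0 \in supp p by rewrite inE lt0r_neq0.
have pqp z : p z * qp z t =
    (if z \in cl z0 then p z else 0) * (a t / pi z0).
  have [zS|zNS] := boolP (z \in supp p); last first.
    by rewrite notin_supp // mul0r; case: ifP; rewrite mul0r.
  have Tt_iff := Tset_clE (cl_classes zS) z0S qz0.
  rewrite qprime_supp //; case: asboolP => [/Tt_iff <-|nTt]; first by rewrite cl_self.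
  case: ifPn => [zC|]; last by rewrite mulr0 mul0r.
  by case: nTt; apply/Tt_iff; rewrite (classes_clE (cl_classes z0S) zC).
rewrite /outT (eq_bigr _ (fun z _ => pqp z)) -mulr_suml -big_mkcond /=.
by rewrite mulrC divfK // lt0r_neq0 // pmass_gt0 // cl_classes.
Qed.

Lemma qprime_ge0 z t : 0 <= qp z t.
Proof.
have [zS|zNS] := boolP (z \in supp p); last by rewrite qprime_out.
rewrite qprime_supp //; case: asboolP => // _.
by rewrite divr_ge0 ?outT_ge0 // ltW // pmass_gt0 // cl_classes.
Qed.

Lemma qprime_gt0 z t : 0 < q z t -> 0 < qp z t.
Proof.
have [zS|zNS] := boolP (z \in supp p); last by rewrite qprime_out.
move=> qz; rewrite qprime_supp // asboolT; last by exists z; rewrite ?cl_self.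
rewrite divr_gt0 ?pmass_gt0 ?cl_classes //.
exact: outT_gt0 (supp_gt0 zS) qz.
Qed.

Lemma Tset_qprime C : C \in classes p -> Tset q C = Tset qp C.
Proof.
move=> CP; apply/seteqP; split=> t [z zC]; have zS := classes_supp CP zC.
  by move=> qz; exists z => //; exact: qprime_gt0.
rewrite qprime_supp // -(classes_clE CP zC).
by case: asboolP => [Tt _|_]; rewrite ?ltxx.
Qed.

Lemma qprime_channel : channel qp.
Proof.
split=> [|z]; first exact: qprime_ge0.
rewrite nneseries_esumT => [|t]; last by rewrite lee_fin qprime_ge0.
have [zS|zNS] := boolP (z \in supp p); last first.
  by under eq_esum do rewrite qprime_out //; exact: channel_esum.
transitivity (\esum_(t in Tset q (cl z)) ((pi z)^-1 * a t)%:E)%E.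
  rewrite [RHS]esum_mkcond; apply: eq_esum => t _; rewrite qprime_supp //.
  by case: asboolP => [Tt|nTt]; rewrite ?(mem_set Tt) ?memNset // mulrC.
have pi_gt0 := pmass_gt0 (cl_classes zS).
rewrite esumZ_nat; last 2 first.
- by rewrite invr_ge0 ltW.
- exact: outT_ge0.
by rewrite esum_Tset_outT ?cl_classes // -EFinM mulVf // lt0r_neq0.
Qed.

Lemma qprime_lnE z t :
  p z * qp z t * ln (qp z t / a t) = - (p z * ln (pi z)) * qp z t.
Proof.
have [zS|zNS] := boolP (z \in supp p); last by rewrite notin_supp // !mul0r oppr0 mul0r.
have pi_gt0 := pmass_gt0 (cl_classes zS).
rewrite qprime_supp //; case: asboolP => [[z' z'C qz']|_]; last by rewrite !(mulr0, mul0r).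
have at_gt0 := outT_gt0 (supp_gt0 (classes_supp (cl_classes zS) z'C)) qz'.
rewrite mulrAC [_ / a t]mulrAC divff ?lt0r_neq0 // mul1r lnV ?posrE //; ring.
Qed.

Lemma q_lnE z t : p z * q z t * ln (q z t / a t) =
  p z * q z t * ln (q z t / qp z t) - p z * ln (pi z) * q z t.
Proof.
have [zS|zNS] := boolP (z \in supp p); last by rewrite notin_supp // !mul0r subrr.
have [->|qz_neq0] := eqVneq (q z t) 0; first by rewrite !(mulr0, mul0r) subrr.
have qz : 0 < q z t by rewrite lt_def qz_neq0 q_ge0.
have at_gt0 := outT_gt0 (supp_gt0 zS) qz.
have pi_gt0 := pmass_gt0 (cl_classes zS).
rewrite qprime_supp // asboolT; last by exists z; rewrite ?cl_self.
have -> : q z t / (a t / pi z) = q z t / a t * pi z by field; rewrite !lt0r_neq0.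
by rewrite [ln (_ * pi z)]lnM ?posrE ?divr_gt0 //; ring.
Qed.

Lemma gkl_q_qprime z t :
  0 <= gkl (q z t) (qp z t) /\ (gkl (q z t) (qp z t) = 0 -> q z t = qp z t).
Proof. exact: gkl_ge0 (q_ge0 z t) (qprime_ge0 z t) (@qprime_gt0 z t). Qed.

Lemma p_gkl_ge0 v : 0 <= p v.1 * gkl (q v.1 v.2) (qp v.1 v.2).
Proof. by rewrite mulr_ge0 //; case: (gkl_q_qprime v.1 v.2). Qed.

Lemma MI_qprime : MI p qp = (\sum_z - (p z * ln (pi z)))%:E.
Proof.
rewrite MI_xsum //; last exact: qprime_ge0.
have c_ge0 z : 0 <= - (p z * ln (pi z)).
  by rewrite oppr_ge0 mulr_ge0_le0 ?ln_le0 ?pmass_le1.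
rewrite -(esum_channel_pair qprime_channel c_ge0) -xsum_ge0 => [|v]; last first.
  by rewrite mulr_ge0 ?qprime_ge0.
by congr xsum; apply: funext => -[z t]; rewrite /= outT_qprime qprime_lnE.
Qed.

(* On the support of [q z], [qp z t / a t = 1 / pi z]; the terms [c z * q z t] and
   [p z * qp z t] make the integrand a difference of nonnegative functions. *)
Lemma MI_q_decomp : MI p q = (MI p qp +
  \esum_(v in [set: X * Y * nat]) (p v.1 * gkl (q v.1 v.2) (qp v.1 v.2))%:E)%E.
Proof.
pose c z := p z * (1 - ln (pi z)).
have c_ge0 z : 0 <= c z.
  by rewrite mulr_ge0 // subr_ge0 (le_trans (ln_le0 (pmass_le1 _))).
rewrite MI_xsum //.
have -> : (fun v => (p v.1 * q v.1 v.2 * ln (q v.1 v.2 / a v.2))%:E) = fun v =>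
    (p v.1 * gkl (q v.1 v.2) (qp v.1 v.2) + c v.1 * q v.1 v.2 -
     p v.1 * qp v.1 v.2)%:E.
  by apply: funext => -[z t]; congr EFin; rewrite /= q_lnE /gkl /c; ring.
rewrite xsumB; last 3 first.
- by move=> v; rewrite addr_ge0 ?p_gkl_ge0 // mulr_ge0 ?c_ge0 ?q_ge0.
- by move=> v; rewrite mulr_ge0 ?qprime_ge0.
- by right; rewrite (esum_channel_pair qprime_channel p_ge0).
under eq_esum do rewrite EFinD.
rewrite esumD; last 2 first.
- by move=> v _; rewrite lee_fin p_gkl_ge0.
- by move=> v _; rewrite lee_fin; exact: mulr_ge0 (c_ge0 _) (q_ge0 _ _).
rewrite (esum_channel_pair q_channel c_ge0) (esum_channel_pair qprime_channel p_ge0).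
rewrite MI_qprime -addeA -EFinB addeC; congr (EFin _ + _).
by rewrite -sumrB; apply: eq_bigr => z _; rewrite /c; ring.
Qed.

Lemma MI_qprime_le : (MI p qp <= MI p q)%E.
Proof.
by rewrite MI_q_decomp leeDl // esum_ge0 // => v _; rewrite lee_fin p_gkl_ge0.
Qed.

Lemma MI_eq_qprimeP : MI p q = MI p qp <-> q = qp.
Proof.
split=> [|<-//]; rewrite MI_q_decomp MI_qprime.
move=> MI_eq; have /esum_eq0P pgkl0 :
    (\esum_(v in [set: X * Y * nat]) (p v.1 * gkl (q v.1 v.2) (qp v.1 v.2))%:E)%E = 0%E.
  have : (0 <= \esum_(v in [set: X * Y * nat]) (p v.1 * gkl (q v.1 v.2) (qp v.1 v.2))%:E)%E.
    by apply: esum_ge0 => v _; rewrite lee_fin p_gkl_ge0.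
  move: MI_eq; case: (\esum_(v in _) _)%E => [e||] //=.
  by rewrite -EFinD => -[e0] _; congr EFin; lra.
apply/funext => z; apply/funext => t.
have [zS|zNS] := boolP (z \in supp p); last by rewrite qprime_out.
have /eqP := pgkl0 p_gkl_ge0 (z, t); rewrite mulf_eq0 gt_eqF ?supp_gt0 //= => /eqP.
by case: (gkl_q_qprime z t) => _; apply.
Qed.

End Coarsening.

Theorem lemma12 (R : realType) (X Y : finType) (p : X * Y -> R)
    (q : X * Y -> nat -> R) :
  is_dist p ->
  (forall x, 0 < pX p x) -> (forall y, 0 < pY p y) ->
  channel q ->
  KL (outT p q) (outTt p q) = KL p (pXpY p) ->
  [/\ (forall z, z \in supp p -> forall C, C \in classes p ->
         setsum (q z) (Tset q C) = (if z \in C then 1 else 0)),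
      (forall t, outT p (qprime p q) t = outT p q t),
      (forall C, C \in classes p -> Tset q C = Tset (qprime p q) C) &
      ((MI p (qprime p q) <= MI p q)%E /\
       (MI p q = MI p (qprime p q) <-> q = qprime p q))].
Proof.
move=> [p_ge0 p_sum1] pX_gt0 pY_gt0 q_channel KL_eq; split.
- by move=> z zS C CP; exact: setsum_Tset_q.
- exact: outT_qprime.
- exact: Tset_qprime.
- by split; [exact: MI_qprime_le | exact: MI_eq_qprimeP].
Qed.
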